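(* Let $H$ be a connected $3$-uniform hypergraph on $n$ vertices. Then $|E(H)|\geq \left\lfloor \frac{1}{2}\binom{n}{2}\right\rfloor$. Moreover, this bound is attained: for every $n$ there exists a connected $3$-uniform hypergraph on $n$ vertices with exactly $\left\lfloor \frac{1}{2}\binom{n}{2}\right\rfloor$ edges.
   Context: A strong path in a $3$-uniform hypergraph $H$ is a sequence of edges $E_1,\dots,E_m$ of $H$ with $|E_t\cap E_{t+1}|=2$ for all $t$. $H$ is connected if for any two distinct $2$-subsets $\{u,v\},\{u',v'\}$ of $V(H)$ there is a strong path $E_1,\dots,E_m$ in $H$ with $\{u,v\}\subseteq E_1$ and $\{u',v'\}\subseteq E_m$ (for $n\le 2$ the condition is vacuous). *)

From mathcomp Require Import all_boot.
Set Implicit Arguments. Unset Strict Implicit. Unset Printing Implicit Defensive.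

Definition uniform3 (T : finType) (E : {set {set T}}) : Prop :=
  forall A, A \in E -> #|A| = 3.

Definition strong_path (T : finType) (E : {set {set T}}) (s : seq {set T}) : bool :=
  all (fun A => A \in E) s && sorted (fun A B => #|A :&: B| == 2) s.

Definition hconnected (T : finType) (E : {set {set T}}) : Prop :=
  forall P Q : {set T}, #|P| = 2 -> #|Q| = 2 -> P != Q ->
    exists (A : {set T}) (s : seq {set T}),
      [/\ strong_path E (A :: s), P \subset A & Q \subset last A s].

From mathcomp Require Import all_boot zify.
Set Implicit Arguments. Unset Strict Implicit. Unset Printing Implicit Defensive.

(* Lower bound: while some edge is unused, connectivity yields an unused edge
   containing a pair already covered by the used ones (walk along a strong path
   from a covered pair into an unused edge and stop at the first unused edge).
   Adding edges in such an order, each edge after the first adds at most two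
   pairs to the 2-shadow, and connectivity makes the shadow all [C(n,2)] pairs,
   so [C(n,2) <= 2|E| + 1].
   Construction: pass from [m] to [m + 4] vertices by adding [2m + 3] triples
   that cover the [4m + 6] pairs meeting the new vertices and that are all
   strongly linked to [{0,1,2}]; the cases [n <= 5] are explicit. *)

Section Shadow.
Variable T : finType.
Implicit Types (F G : {set {set T}}) (e P : {set T}).

Definition shadow2 F := [set P : {set T} | (#|P| == 2) && [exists A in F, P \subset A]].

Definition touches F e := exists2 P : {set T}, P \subset e & P \in shadow2 F.

Lemma mem_shadow2 F P : (P \in shadow2 F) = (#|P| == 2) && [exists A in F, P \subset A].
Proof. by rewrite inE. Qed.

Lemma shadow2U F G : shadow2 (F :|: G) = shadow2 F :|: shadow2 G.
Proof.
apply/setP=> P; rewrite !inE -andb_orr; congr (_ && _).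
apply/existsP/orP => [[A /andP[]]|[] /existsP[A /andP[AF PA]]].
- by rewrite inE => /orP[] AF PA; [left|right]; apply/existsP; exists A; rewrite AF.
- by exists A; rewrite inE AF.
- by exists A; rewrite inE AF orbT.
Qed.

Lemma card_setD1_triple e x : #|e| = 3 -> x \in e -> #|e :\ x| = 2.
Proof. by move=> e3 xe; move: (cardsD1 x e); rewrite xe e3; lia. Qed.

Lemma card_shadow2_triple e : #|e| = 3 -> #|shadow2 [set e]| <= 3.
Proof.
move=> e3; rewrite -e3; apply: leq_trans (leq_imset_card (fun x => e :\ x) e).
apply/subset_leq_card/subsetP => P.
rewrite mem_shadow2 => /andP[/eqP P2 /existsP[A /andP[/set1P -> Pe]]].
have : 0 < #|e :\: P| by rewrite cardsD (setIidPr Pe) e3 P2.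
rewrite card_gt0 => /set0Pn[x /setDP[xe xP]]; apply/imsetP; exists x => //.
by apply/eqP; rewrite eqEcard subsetD1 Pe xP card_setD1_triple ?P2.
Qed.

Lemma triple_other_pair e P : #|e| = 3 ->
  exists Q : {set T}, [/\ Q \subset e, #|Q| = 2 & Q != P].
Proof.
move=> e3; have /card_gt1P[x [y [xe ye xy]]] : 1 < #|e| by rewrite e3.
have [Px|Py] := eqVneq (e :\ x) P; last first.
  by exists (e :\ x); rewrite subD1set card_setD1_triple.
exists (e :\ y); rewrite subD1set card_setD1_triple //; split=> //.
rewrite -Px; apply/negP => /eqP eyx; have := setD11 y e.
by rewrite eyx !inE eq_sym xy ye.
Qed.

Lemma card_shadow2_setU1 F e : #|e| = 3 -> touches F e ->
  #|shadow2 (e |: F)| <= #|shadow2 F| + 2.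
Proof.
move=> e3 [P Pe PF]; have := cardsUI (shadow2 [set e]) (shadow2 F).
have : 0 < #|shadow2 [set e] :&: shadow2 F|.
  apply/card_gt0P; exists P; rewrite inE PF andbT mem_shadow2.
  by move: PF; rewrite mem_shadow2 => /andP[-> _]; apply/existsP; exists e; rewrite inE eqxx.
have := card_shadow2_triple e3; rewrite shadow2U; lia.
Qed.

End Shadow.

Section LowerBound.
Variables (T : finType) (E : {set {set T}}).
Hypotheses (E3 : uniform3 E) (Econn : hconnected E).
Implicit Types (F : {set {set T}}) (A e P : {set T}).

Lemma strong_path_exit F A s : strong_path E (A :: s) ->
  touches F A -> last A s \in F \/ exists2 e, e \in E :\: F & touches F e.
Proof.
elim: s A => [|B s IH] A /andP[/= /andP[AE allE] sortedE] A_touch.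
  by case: (boolP (A \in F)) => [|nAF]; [left|right; exists A; rewrite ?inE ?nAF].
have [AinF|nAF] := boolP (A \in F); last by right; exists A; rewrite ?inE ?nAF.
move: sortedE allE => /= /andP[AB pathB] allE; apply: IH; first exact/andP.
exists (A :&: B); first exact: subsetIr.
by rewrite mem_shadow2 AB; apply/existsP; exists A; rewrite AinF subsetIl.
Qed.

Lemma shadow2_exit F : F != set0 -> F \proper E -> exists2 e, e \in E :\: F & touches F e.
Proof.
move=> /set0Pn[e0 e0F] /properP[FE [e' e'E e'F]].
have [x xe0] : exists x, x \in e0 by apply/set0Pn; rewrite -card_gt0 E3 ?(subsetP FE).
have P2 := card_setD1_triple (E3 (subsetP FE _ e0F)) xe0.
have PF : e0 :\ x \in shadow2 F.
  by rewrite mem_shadow2 P2 eqxx; apply/existsP; exists e0; rewrite e0F subD1set.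
have [Q [Qe' Q2 QP]] := triple_other_pair (e0 :\ x) (E3 e'E).
rewrite eq_sym in QP; have [A [s [sp PA Qlast]]] := Econn P2 Q2 QP.
have [lastF|//] := strong_path_exit sp (ex_intro2 _ _ (e0 :\ x) PA PF).
exists e'; first by rewrite inE e'E e'F.
by exists Q => //; rewrite mem_shadow2 Q2 eqxx; apply/existsP; exists (last A s); rewrite lastF.
Qed.

Lemma small_shadow2_subfamily k : k < #|E| ->
  exists F, [/\ F \subset E, #|F| = k.+1 & #|shadow2 F| <= 2 * k + 3].
Proof.
elim: k => [|k IH] Ek.
  have [A AE] : exists A, A \in E by apply/set0Pn; rewrite -card_gt0.
  by exists [set A]; rewrite sub1set AE cards1 (card_shadow2_triple (E3 AE)).
have [F [FE Fk FS]] := IH (ltnW Ek).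
have F0 : F != set0 by rewrite -card_gt0 Fk.
have FltE : F \proper E by rewrite properEcard FE Fk.
have [e /setDP[eE eF] eF_touch] := shadow2_exit F0 FltE.
exists (e |: F); rewrite subUset sub1set eE FE cardsU1 eF Fk.
split=> //; apply: leq_trans (card_shadow2_setU1 (E3 eE) eF_touch) _.
by rewrite mulnSr addnAC leq_add2r.
Qed.

Lemma card_shadow2_connected : E != set0 -> #|shadow2 E| <= 2 * #|E| + 1.
Proof.
rewrite -card_gt0 => E0; have Epred : #|E|.-1 < #|E| by rewrite ltn_predL.
have [F [FE F_card FS]] := small_shadow2_subfamily Epred.
have FE_eq : F = E by apply/eqP; rewrite eqEcard FE F_card (prednK E0) leqnn.
by move: FS; rewrite FE_eq; case: #|E| E0 => // n _; rewrite mulnSr -addnA.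
Qed.

Lemma shadow2_connected : 1 < 'C(#|T|, 2) -> shadow2 E = [set P : {set T} | #|P| == 2].
Proof.
move=> many; apply/setP => P; rewrite mem_shadow2 inE.
case: eqP => //= P2.
have : 0 < #|[set Q : {set T} | #|Q| == 2] :\ P|.
  by move: (cardsD1 P [set Q : {set T} | #|Q| == 2]); rewrite card_draws; lia.
rewrite card_gt0 => /set0Pn[Q /setD1P[QP]]; rewrite inE => /eqP Q2; rewrite eq_sym in QP.
have [A [s [/andP[/= /andP[AE _] _] PA _]]] := Econn P2 Q2 QP.
by apply/existsP; exists A; rewrite AE.
Qed.

Theorem card_connected_ge : 'C(#|T|, 2) %/ 2 <= #|E|.
Proof.
have [|many] := leqP 'C(#|T|, 2) 1; first by lia.
have full := shadow2_connected many.
have E0 : E != set0.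
  have /card_gt0P[P] : 0 < #|shadow2 E| by rewrite full card_draws ltnW.
  by rewrite mem_shadow2 => /andP[_ /existsP[A /andP[AE _]]]; apply/set0Pn; exists A.
have := card_shadow2_connected E0; rewrite full card_draws; lia.
Qed.

End LowerBound.

Section Linked.
Variables (V : Type) (r : rel V) (D : pred V).

Definition linked x y := exists p, [/\ all D (x :: p), path r x p & last x p = y].

Lemma linked_refl x : D x -> linked x x.
Proof. by move=> Dx; exists [::]; rewrite /= Dx. Qed.

Lemma linked_trans y x z : linked x y -> linked y z -> linked x z.
Proof.
move=> [p [Dp rp <-]] [q [/= /andP[_ Dq] rq <-]]; exists (p ++ q).
by rewrite last_cat cat_path rp rq -cat_cons all_cat Dp Dq.
Qed.

Lemma linked_cons x y z : D x -> r x y -> linked y z -> linked x z.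
Proof. by move=> Dx rxy [p [Dp rp <-]]; exists (y :: p); rewrite /= Dx rxy. Qed.

Lemma linked_sym : symmetric r -> forall x y, linked x y -> linked y x.
Proof.
move=> r_sym x _ [p [Dp rp <-]]; elim: p x Dp rp => [|y p IH] x /=.
  by rewrite andbT => Dx _; apply: linked_refl.
move=> /and3P[Dx Dy Dp] /andP[rxy rp]; apply: (linked_trans (IH y _ _)) => //=.
  by rewrite Dy.
by apply: linked_cons Dy _ (linked_refl Dx); rewrite r_sym.
Qed.

End Linked.

Lemma linked_sub V (r : rel V) (D D' : pred V) x y :
  {subset D <= D'} -> linked r D x y -> linked r D' x y.
Proof. by move=> DD' [p [Dp rp lp]]; exists p; split=> //; apply: sub_all Dp => u /DD'. Qed.

Lemma linked_map U V (r : rel U) (r' : rel V) (D : pred U) (D' : pred V) (f : U -> V) x y :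
  {in D, forall u, D' (f u)} -> {in D &, forall u v, r u v -> r' (f u) (f v)} ->
  linked r D x y -> linked r' D' (f x) (f y).
Proof.
move=> fD fr [p [Dp rp <-]]; exists (map f p); split; last exact: last_map.
- by rewrite -map_cons all_map; apply: sub_all Dp => u /fD.
- by rewrite path_map; apply: sub_in_path Dp rp.
Qed.

Lemma linked_radius2 (V : eqType) (r : rel V) (L : seq V) a t : a \in L ->
  all (fun t => [|| t == a, r t a | has (fun u => r t u && r u a) L]) L ->
  t \in L -> linked r (fun u => u \in L) t a.
Proof.
move=> aL /allP near tL.
have aa : linked r (fun u => u \in L) a a by apply: linked_refl.
case/or3P: (near t tL) => [/eqP->//|rta|/hasP[u uL /andP[rtu rua]]].
- exact: linked_cons _ rta aa.
- exact: linked_cons _ rtu (linked_cons _ rua aa).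
Qed.

Definition is_triple n (t : seq nat) := uniq t && (size t == 3) && all (fun x => x < n) t.

Definition share2 (s t : seq nat) := count (fun x => x \in t) s == 2.

Definition fresh_core m : seq (seq nat) :=
  [:: [:: 0; 1; m]; [:: 0; m.+1; m.+2]; [:: m; m.+1; m.+3]; [:: m; m.+2; m.+3]].

Ltac triple_arith := rewrite /is_triple /share2 /fresh_core /= ?inE; lia.

Definition fresh_triples m : seq (seq nat) :=
  fresh_core m ++ [seq [:: i; m; m.+1] | i <- iota 1 m.-1]
               ++ [seq [:: i; m.+2; m.+3] | i <- iota 0 m].

(* [min_triples 2] is empty but [min_triples 6] still contains [[0; 1; 2]],
   as the member [[0; 1; m]] of [fresh_triples 2]. *)
Fixpoint min_triples n : seq (seq nat) :=
  match n with
  | 0 | 1 | 2 => [::]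
  | 3 => [:: [:: 0; 1; 2]]
  | 4 => [:: [:: 0; 1; 2]; [:: 1; 2; 3]; [:: 0; 2; 3]]
  | 5 => [:: [:: 0; 1; 2]; [:: 1; 2; 3]; [:: 0; 2; 3]; [:: 0; 1; 4]; [:: 2; 3; 4]]
  | m.+4 => min_triples m ++ fresh_triples m
  end.

Lemma min_triples_add4 m : 2 <= m -> min_triples m.+4 = min_triples m ++ fresh_triples m.
Proof. by case: m => [|[|m]]. Qed.

Lemma min_triples_ind (P : nat -> Prop) :
  (forall n, n <= 5 -> P n) -> (forall m, 2 <= m -> P m -> P m.+4) -> forall n, P n.
Proof.
move=> Psmall Pstep; elim/ltn_ind => -[|[|[|[|[|[|m]]]]]] IH; try exact: Psmall.
by apply: Pstep; last by apply: IH; lia.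
Qed.

Lemma size_min_triples n : size (min_triples n) = 'C(n, 2) %/ 2.
Proof.
elim/min_triples_ind: n => [|m m2 IH]; first by case=> [|[|[|[|[|[|]]]]]].
rewrite min_triples_add4 // size_cat IH /fresh_triples !size_cat !size_map !size_iota.
rewrite /fresh_core /= !binS !bin1 !bin0; lia.
Qed.

Lemma fresh_triplesP m t : t \in fresh_triples m ->
  [\/ t \in fresh_core m,
      exists2 i, 1 <= i < m & t = [:: i; m; m.+1]
    | exists2 i, i < m & t = [:: i; m.+2; m.+3]].
Proof.
rewrite !mem_cat => /or3P[|/mapP[i]|/mapP[i]]; rewrite ?mem_iota; first by constructor 1.
- by move=> i_range ->; constructor 2; exists i => //; lia.
- by move=> i_range ->; constructor 3; exists i.
Qed.

Lemma mem_fresh_low m i : 1 <= i < m -> [:: i; m; m.+1] \in fresh_triples m.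
Proof.
by move=> i_range; rewrite !mem_cat (map_f (fun i => [:: i; m; m.+1])) ?orbT // mem_iota; lia.
Qed.

Lemma mem_fresh_high m i : i < m -> [:: i; m.+2; m.+3] \in fresh_triples m.
Proof. by move=> im; rewrite !mem_cat (map_f (fun i => [:: i; m.+2; m.+3])) ?orbT // mem_iota. Qed.

Lemma is_triple_widen n n' t : n <= n' -> is_triple n t -> is_triple n' t.
Proof. by rewrite /is_triple => nn' /andP[-> /allP tn]; apply/allP => x /tn /leq_trans; apply. Qed.

Lemma fresh_triples_ok m t : 2 <= m -> t \in fresh_triples m -> is_triple m.+4 t.
Proof.
by move=> m2; case/fresh_triplesP => [|[i i_range ->]|[i i_range ->]];
  [rewrite !inE => /or4P[]/eqP-> | |]; triple_arith.
Qed.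

Lemma min_triples_ok n t : t \in min_triples n -> is_triple n t.
Proof.
elim/min_triples_ind: n t => [n n5|m m2 IH] t.
  by move: t; apply/allP; case: n n5 => [|[|[|[|[|[|]]]]]].
rewrite min_triples_add4 // mem_cat => /orP[/IH|/(fresh_triples_ok m2)] //.
by apply: is_triple_widen; lia.
Qed.

Lemma min_triples_anchor n : 2 < n -> [:: 0; 1; 2] \in min_triples n.
Proof.
elim/min_triples_ind: n => [n n5|m m2 IH] n2; first by case: n n5 n2 => [|[|[|[|[|[|]]]]]].
rewrite min_triples_add4 // mem_cat; have [m3|] := ltnP 2 m; first by rewrite IH.
by move=> m_le2; have -> : m = 2 by lia.
Qed.

Lemma fresh_triples_cover m a b : a < b < m.+4 -> m <= b ->
  exists2 t, t \in fresh_triples m & (a \in t) && (b \in t).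
Proof.
move=> /andP[ab bm] mb.
have core_cover : has (fun t => (a \in t) && (b \in t)) (fresh_core m) ->
    exists2 t, t \in fresh_triples m & (a \in t) && (b \in t).
  by case/hasP => t tf abt; exists t; rewrite // mem_cat tf.
have [am|ma] := ltnP a m; last by apply: core_cover; triple_arith.
have [b_high|b_low] := leqP m.+2 b.
  by exists [:: a; m.+2; m.+3]; [apply: mem_fresh_high | triple_arith].
have [a0|a_pos] := posnP a; first by apply: core_cover; triple_arith.
by exists [:: a; m; m.+1]; [apply: mem_fresh_low; lia | triple_arith].
Qed.

Lemma min_triples_cover n a b : 2 < n -> a < b < n ->
  exists2 t, t \in min_triples n & (a \in t) && (b \in t).
Proof.
elim/min_triples_ind: n a b => [n n5|m m2 IH] a b n2 abn.
  suff: has (fun t => (a \in t) && (b \in t)) (min_triples n) by case/hasP => t tn abt; exists t.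
  case: n n5 n2 abn => [|[|[|[|[|[|]]]]]] // _ _;
    by case: a => [|[|[|[|a]]]]; case: b => [|[|[|[|[|b]]]]] //; case/andP.
rewrite min_triples_add4 //.
have [bm|mb] := ltnP b m; last first.
  have [t tf abt] := fresh_triples_cover abn mb.
  by exists t; rewrite // mem_cat tf orbT.
have [b2|b_le1] := leqP 2 b.
  have [t tm abt] : exists2 t, t \in min_triples m & (a \in t) && (b \in t).
    by apply: IH; [lia | rewrite (andP abn).1 bm].
  by exists t; rewrite // mem_cat tm.
by exists [:: 0; 1; m]; [rewrite !mem_cat inE eqxx orbT | triple_arith].
Qed.

Lemma fresh_triples_linked m (L : seq (seq nat)) t : 2 <= m ->
  [:: 0; 1; 2] \in L ++ fresh_triples m -> t \in fresh_triples m ->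
  linked share2 (fun u => u \in L ++ fresh_triples m) t [:: 0; 1; 2].
Proof.
set D := fun u => u \in L ++ fresh_triples m; move=> m2 anchor.
have fresh u : u \in fresh_triples m -> D u by move=> uf; rewrite /D mem_cat uf orbT.
have core u : u \in fresh_core m -> D u by move=> uf; apply: fresh; rewrite mem_cat uf.
have l01m : linked share2 D [:: 0; 1; m] [:: 0; 1; 2].
  have [->|m3] := eqVneq m 2; first exact: linked_refl.
  apply: (linked_cons _ _ (linked_refl _ (anchor : D _))); last by triple_arith.
  by apply: core; rewrite inE eqxx.
have l_1m : linked share2 D [:: 1; m; m.+1] [:: 0; 1; 2].
  by apply: (linked_cons _ _ l01m); [apply/fresh/mem_fresh_low; lia | triple_arith].
have l_low i : 1 <= i < m -> linked share2 D [:: i; m; m.+1] [:: 0; 1; 2].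
  move=> i_range; have [->//|i1] := eqVneq i 1.
  by apply: (linked_cons _ _ l_1m); [apply/fresh/mem_fresh_low | triple_arith].
have l_m13 : linked share2 D [:: m; m.+1; m.+3] [:: 0; 1; 2].
  by apply: (linked_cons _ _ l_1m); [apply: core; rewrite !inE eqxx ?orbT | triple_arith].
have l_m23 : linked share2 D [:: m; m.+2; m.+3] [:: 0; 1; 2].
  by apply: (linked_cons _ _ l_m13); [apply: core; rewrite !inE eqxx ?orbT | triple_arith].
have l_high i : i < m -> linked share2 D [:: i; m.+2; m.+3] [:: 0; 1; 2].
  by move=> im; apply: (linked_cons _ _ l_m23); [apply/fresh/mem_fresh_high | triple_arith].
have l_0m12 : linked share2 D [:: 0; m.+1; m.+2] [:: 0; 1; 2].
  apply: (linked_cons _ _ (l_high 0 _)); [apply: core | triple_arith | lia].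
  by rewrite !inE eqxx ?orbT.
case/fresh_triplesP => [|[i i_range ->]|[i i_range ->]]; [|exact: l_low|exact: l_high].
by rewrite !inE => /or4P[]/eqP->.
Qed.

Lemma min_triples_linked n t : t \in min_triples n ->
  linked share2 (fun u => u \in min_triples n) t [:: 0; 1; 2].
Proof.
elim/min_triples_ind: n t => [n n5|m m2 IH] t.
  by case: n n5 => [|[|[|[|[|[|]]]]]] // _; apply: linked_radius2.
rewrite min_triples_add4 // mem_cat => /orP[tm|tf]; last first.
  by apply: fresh_triples_linked; rewrite // -min_triples_add4 // min_triples_anchor.
by apply: linked_sub (IH t tm) => u um; rewrite mem_cat um.
Qed.

Definition meet2 (T : finType) : rel {set T} := fun A B => #|A :&: B| == 2.

Lemma meet2_sym (T : finType) : symmetric (@meet2 T).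
Proof. by move=> A B; rewrite /meet2 setIC. Qed.

Lemma hconnected_small (T : finType) (E : {set {set T}}) : #|T| <= 2 -> hconnected E.
Proof.
move=> T2 P Q P2 Q2; have full (R : {set T}) : #|R| = 2 -> R = [set: T].
  by move=> R2; apply/eqP; rewrite eqEcard subsetT cardsT R2 T2.
by rewrite (full P P2) (full Q Q2) eqxx.
Qed.

Lemma linked_hconnected (T : finType) (E : {set {set T}}) :
  (forall P : {set T}, #|P| = 2 -> exists2 A, A \in E & P \subset A) ->
  {in E &, forall A B, linked (@meet2 T) (fun A => A \in E) A B} -> hconnected E.
Proof.
move=> cover link P Q P2 Q2 _; have [A AE PA] := cover P P2; have [B BE QB] := cover Q Q2.
by have [s [Es meetE lastE]] := link A B AE BE; exists A, s; rewrite lastE; split=> //; apply/andP.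
Qed.

Definition vertex_set n (t : seq nat) : {set 'I_n} := [set i : 'I_n | val i \in t].

Lemma card_vertex_set n t : uniq t -> all (fun x => x < n) t -> #|vertex_set n t| = size t.
Proof.
move=> t_uniq t_n; rewrite cardE -(size_map val); apply/perm_size/uniq_perm => //.
  by rewrite map_inj_uniq ?enum_uniq //; exact: val_inj.
move=> x; apply/mapP/idP => [[i]|xt]; first by rewrite mem_enum inE => it ->.
by exists (Ordinal (allP t_n x xt)); rewrite ?mem_enum ?inE.
Qed.

Lemma meet2_vertex_set n s t : is_triple n s -> share2 s t ->
  meet2 (vertex_set n s) (vertex_set n t).
Proof.
move=> /andP[/andP[s_uniq _] s_n] st; rewrite /meet2.
have -> : vertex_set n s :&: vertex_set n t = vertex_set n [seq x <- s | x \in t].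
  by apply/setP => i; rewrite !inE mem_filter andbC.
rewrite card_vertex_set ?filter_uniq // ?size_filter //.
by apply/allP => x; rewrite mem_filter => /andP[_ /(allP s_n)].
Qed.

Definition min_hypergraph n : {set {set 'I_n}} := [set A in map (vertex_set n) (min_triples n)].

Lemma min_hypergraph_uniform n : uniform3 (min_hypergraph n).
Proof.
move=> A; rewrite inE => /mapP[t /min_triples_ok /andP[/andP[t_uniq /eqP t3] t_n] ->].
by rewrite card_vertex_set.
Qed.

Lemma min_hypergraph_cover n : 2 < n -> forall P : {set 'I_n}, #|P| = 2 ->
  exists2 A, A \in min_hypergraph n & P \subset A.
Proof.
move=> n3 P /eqP/cards2P[x [y [xy ->]]].
wlog xy_lt : x y xy / x < y.
  move=> W; have [|yx|eq_xy] := ltngtP x y; [exact: W | | by rewrite (val_inj eq_xy) eqxx in xy].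
  by rewrite setUC; apply: W; rewrite // eq_sym.
have xyn : x < y < n by rewrite xy_lt ltn_ord.
have [t tL /andP[xt yt]] := min_triples_cover n3 xyn.
by exists (vertex_set n t); rewrite ?inE ?map_f // subUset !sub1set !inE xt yt.
Qed.

Lemma min_hypergraph_linked n : {in min_hypergraph n &, forall A B,
  linked (@meet2 'I_n) (fun A => A \in min_hypergraph n) A B}.
Proof.
have to_anchor t : t \in min_triples n -> linked (@meet2 'I_n)
    (fun A => A \in min_hypergraph n) (vertex_set n t) (vertex_set n [:: 0; 1; 2]).
  move=> tL; apply: linked_map (min_triples_linked tL).
  - by move=> u uL; rewrite inE map_f.
  - by move=> u v uL _; apply/meet2_vertex_set/min_triples_ok.
move=> _ _ /[!inE] /mapP[s sL ->] /mapP[t tL ->].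
exact: linked_trans (to_anchor s sL) (linked_sym (@meet2_sym _) (to_anchor t tL)).
Qed.

Lemma min_hypergraph_connected n : hconnected (min_hypergraph n).
Proof.
have [n2|n3] := leqP n 2; first by apply: hconnected_small; rewrite card_ord.
by apply: linked_hconnected; [exact: min_hypergraph_cover | exact: min_hypergraph_linked].
Qed.

(* Distinctness of the triples is never checked: counting only bounds the
   cardinality by [size], and the lower bound gives the reverse inequality. *)
Lemma card_min_hypergraph n : #|min_hypergraph n| = 'C(n, 2) %/ 2.
Proof.
apply/eqP; rewrite eqn_leq -{1}size_min_triples.
have := card_connected_ge (@min_hypergraph_uniform n) (@min_hypergraph_connected n).
rewrite card_ord => ->; rewrite andbT.
by rewrite cardsE (leq_trans (card_size _)) // size_map.
Qed.

Theorem lemma13 :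
  (forall (T : finType) (E : {set {set T}}),
      uniform3 E -> hconnected E -> 'C(#|T|, 2) %/ 2 <= #|E|) /\
  (forall n : nat, exists E : {set {set 'I_n}},
      [/\ uniform3 E, hconnected E & #|E| = 'C(n, 2) %/ 2]).
Proof.
split; first exact: card_connected_ge.
move=> n; exists (min_hypergraph n); split.
- exact: min_hypergraph_uniform.
- exact: min_hypergraph_connected.
- exact: card_min_hypergraph.
Qed.
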